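(* Every betweenness algebra $\langle A,f,g\rangle$ is a weak betweenness algebra; in particular it satisfies (ABTW): for all $a\in A$, if $a\neq 0$ then $g(a,a)\leq a$.
   Context: A PS-algebra is $\langle A,f,g\rangle$ where $A$ is a Boolean algebra with at least two elements (operations $+,\cdot,-,0,1$) and $f,g\colon A^2\to A$ satisfy: $f(x,y)=0$ whenever $x=0$ or $y=0$; $f$ is additive in each argument ($f(x+x',y)=f(x,y)+f(x',y)$, $f(x,y+y')=f(x,y)+f(x,y')$); $g(x,y)=1$ whenever $x=0$ or $y=0$; $g$ is co-additive in each argument ($g(x+x',y)=g(x,y)\cdot g(x',y)$, $g(x,y+y')=g(x,y)\cdot g(x,y')$). A betweenness algebra is a PS-algebra satisfying, for all $x,y,z\in A$: (ABT0) $x\leq f(x,x)$; (ABT1$_f$) $f(x,y)\leq f(y,x)$; (ABT1$_g$) $g(x,y)\leq g(y,x)$; (ABT2) $y\cdot f(x,z)\leq f(x\cdot f(x,y),z)$; (ABT3) $f(x,g(x,-y)\cdot y)\leq y$; (wMIA) if $x\neq0$ and $y\neq0$ then $g(x,y)\leq f(x,y)$. A weak betweenness algebra is a PS-algebra satisfying (ABT0), (ABT1$_f$), (ABT1$_g$), (ABT2) and (ABTW): $a\neq0\Rightarrow g(a,a)\leq a$. *)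

From mathcomp Require Import all_boot all_order.
Set Implicit Arguments. Unset Strict Implicit. Unset Printing Implicit Defensive.
Import Order.TTheory.
Local Open Scope order_scope.

(* A Boolean algebra is a ctbDistrLatticeType (complemented distributive
   lattice with top and bottom): + = `|`, . = `&`, - = ~`, 0 = \bot, 1 = \top.
   "At least two elements" is \bot <> \top. *)

Section Defs.
Context {disp : Order.disp_t} (A : ctbDistrLatticeType disp).

Definition PS_algebra (f g : A -> A -> A) : Prop :=
  (\bot : A) <> \top /\
  (forall x y, x = \bot \/ y = \bot -> f x y = \bot) /\
  (forall x x' y, f (x `|` x') y = f x y `|` f x' y) /\
  (forall x y y', f x (y `|` y') = f x y `|` f x y') /\
  (forall x y, x = \bot \/ y = \bot -> g x y = \top) /\
  (forall x x' y, g (x `|` x') y = g x y `&` g x' y) /\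
  (forall x y y', g x (y `|` y') = g x y `&` g x y').

Definition ABT0 (f : A -> A -> A) : Prop := forall x, x <= f x x.
Definition ABT1f (f : A -> A -> A) : Prop := forall x y, f x y <= f y x.
Definition ABT1g (g : A -> A -> A) : Prop := forall x y, g x y <= g y x.
Definition ABT2 (f : A -> A -> A) : Prop :=
  forall x y z, y `&` f x z <= f (x `&` f x y) z.
Definition ABT3 (f g : A -> A -> A) : Prop :=
  forall x y, f x (g x (~` y) `&` y) <= y.
Definition wMIA (f g : A -> A -> A) : Prop :=
  forall x y, x <> \bot -> y <> \bot -> g x y <= f x y.
Definition ABTW (g : A -> A -> A) : Prop :=
  forall a, a <> \bot -> g a a <= a.

Definition betweenness_algebra (f g : A -> A -> A) : Prop :=
  PS_algebra f g /\ ABT0 f /\ ABT1f f /\ ABT1g g /\ ABT2 f /\ ABT3 f g /\ wMIA f g.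

Definition weak_betweenness_algebra (f g : A -> A -> A) : Prop :=
  PS_algebra f g /\ ABT0 f /\ ABT1f f /\ ABT1g g /\ ABT2 f /\ ABTW g.
End Defs.

From mathcomp Require Import all_boot all_order.
Import Order.Theory.
Local Open Scope order_scope.

(* For a <> 0 put b := g(a,a).-a.  (ABT3) at y = -a gives f(a,b) <= -a, i.e.
   a.f(a,b) = 0, and (wMIA) gives b <= g(a,a) <= f(a,a).  Then (ABT2) at
   (x,y,z) = (a,b,a) yields b = b.f(a,a) <= f(a.f(a,b), a) = f(0,a) = 0,
   hence g(a,a) <= a. *)

Section WeakBetweenness.
Context {disp : Order.disp_t} {A : ctbDistrLatticeType disp} (f g : A -> A -> A).

Lemma ABT3_diff_disjoint : ABT3 f g -> forall x, x `&` f x (g x x `\` x) = \bot.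
Proof.
move=> abt3 x; apply/eqP; rewrite -lex0 -(meetxC x) leI2 //.
by have := abt3 x (~` x); rewrite complK diffE.
Qed.

Lemma ABTW_of_ABT2_ABT3_wMIA :
  (forall y, f \bot y = \bot) -> ABT2 f -> ABT3 f g -> wMIA f g -> ABTW g.
Proof.
move=> f0y abt2 abt3 wmia a a0.
set b := g a a `\` a.
have b_le_faa : b <= f a a by apply: le_trans (leBx _ _) (wmia a a a0 a0).
have : b `&` f a a <= f \bot a by rewrite -(ABT3_diff_disjoint abt3 a); apply: abt2.
by rewrite (meet_idPl b_le_faa) f0y lex0 diff_eq0.
Qed.

End WeakBetweenness.

Theorem proposition26 (disp : Order.disp_t) (A : ctbDistrLatticeType disp)
    (f g : A -> A -> A) :
  betweenness_algebra f g -> weak_betweenness_algebra f g.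
Proof.
move=> [PS [abt0 [abt1f [abt1g [abt2 [abt3 wmia]]]]]].
have f0y y : f \bot y = \bot by case: PS => [_ [f0 _]]; apply: f0; left.
do 5 split => //.
exact: ABTW_of_ABT2_ABT3_wMIA.
Qed.
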